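(* Let $H$ be a real Hilbert space, $c_0$ the Banach space of real sequences converging to $0$ (sup norm), with dual identified with $\ell^1$, let $A:H\to c_0$ be bounded linear with adjoint $A^*:\ell^1\to H$, let $H_n\subset H$ be a subspace of dimension $n$, and let $f^\delta\in H$. Assume $\mathcal N(A)\cap H_n=\{0\}$. Then the set $$\operatorname{argmin}\Big\{\|u\|_1 \;:\; u\in\ell^1,\ \langle z,A^*u\rangle=\langle z,f^\delta\rangle \text{ for all } z\in H_n\Big\}$$ is nonempty.
   Context: $A^*:\ell^1\to H$ is defined by $\langle A^*u,z\rangle=\sum_i u_i (Az)_i$ for $u\in\ell^1$, $z\in H$; it is weak*-to-weak continuous. $\mathcal N(A)$ denotes the null space of $A$. The constraint is equivalent to $P_nA^*u=P_nf^\delta$, where $P_n$ is the orthogonal projection onto $H_n$. *)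

From HB Require Import structures.
From mathcomp Require Import all_boot all_order all_algebra.
From mathcomp Require Import all_classical all_reals all_analysis.
Set Implicit Arguments. Unset Strict Implicit. Unset Printing Implicit Defensive.
Import Order.TTheory GRing.Theory Num.Theory.
Import numFieldNormedType.Exports.
Local Open Scope classical_set_scope.
Local Open Scope ring_scope.

(* ip is an inner product on H inducing the norm of H: together with
   completeness of H this makes H a real Hilbert space. *)
Definition is_inner_product (R : realType) (H : normedModType R)
  (ip : H -> H -> R) : Prop :=
  (forall x y, ip x y = ip y x) /\
  (forall (a : R) (x y z : H), ip (a *: x + y) z = a * ip x z + ip y z) /\
  (forall x, ip x x = `|x| ^+ 2).

(* A : H -> c0, given as a map into real sequences, that is linear,
   takes values in c0 and is bounded for the sup norm. *)
Definition bounded_linear_to_c0 (R : realType) (H : normedModType R)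
  (A : H -> nat -> R) : Prop :=
  (forall (a : R) (x y : H) (i : nat), A (a *: x + y) i = a * A x i + A y i) /\
  (forall x, A x @ \oo --> (0 : R)) /\
  (exists C : R, forall x i, `|A x i| <= C * `|x|).

Definition in_l1 (R : realType) (u : nat -> R) : Prop :=
  cvgn (series (fun k => `|u k|)).
Definition norm1 (R : realType) (u : nat -> R) : R :=
  limn (series (fun k => `|u k|)).

(* <A^* u, z> := sum_i u_i (A z)_i  (definition of the adjoint A^* : l^1 -> H) *)
Definition adj_pair (R : realType) (H : normedModType R)
  (A : H -> nat -> R) (u : nat -> R) (z : H) : R :=
  limn (series (fun i => u i * A z i)).

Definition spanH (R : realType) (H : normedModType R) (n : nat)
  (e : 'I_n -> H) : set H :=
  [set x | exists c : 'I_n -> R, x = \sum_(i < n) c i *: e i].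
Definition lin_indep (R : realType) (H : normedModType R) (n : nat)
  (e : 'I_n -> H) : Prop :=
  forall c : 'I_n -> R, \sum_(i < n) c i *: e i = 0 -> forall i, c i = 0.

Definition feasible (R : realType) (H : normedModType R) (ip : H -> H -> R)
  (A : H -> nat -> R) (Hn : set H) (f : H) : set (nat -> R) :=
  [set u | in_l1 u /\ forall z, Hn z -> ip z f = adj_pair A u z].

From HB Require Import structures.
From mathcomp Require Import all_boot all_order all_algebra.
From mathcomp Require Import all_classical all_reals all_analysis.
From mathcomp Require Import lra.
Import Order.TTheory GRing.Theory Num.Theory.
Import numFieldNormedType.Exports.
Local Open Scope classical_set_scope.
Local Open Scope ring_scope.

Set Implicit Arguments.
Unset Strict Implicit.
Unset Printing Implicit Defensive.

(* Put a_k := A e_k and b_k := <e_k, f>; by linearity u is feasible iff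
   sum_i u_i a_k i = b_k for all k < n.  Injectivity of A on H_n makes the
   sequences a_k linearly independent, so finitely many columns of the matrix
   (a_k i) already have full row rank and admit a finitely supported
   biorthogonal family w.  Since each a_k tends to 0, past some index N any
   feasible v can be truncated and repaired with a combination of the w_k
   costing at most the discarded l^1 tail of v.  So it suffices to minimize
   the l^1 norm over the closed affine set of solutions supported in [0, N),
   where a minimizer exists by coercivity. *)

Section RowNorm1.
Variable R : realType.

Definition norm1_rV N (x : 'rV[R]_N) : R := \sum_(i < N) `|x ord0 i|.

Lemma continuous_sum_coord N (F : 'I_N -> R -> R) :
  (forall i, continuous (F i)) ->
  continuous (fun x : 'rV[R]_N => \sum_(i < N) F i (x ord0 i)).
Proof.
move=> Fc; apply: continuous_big => [|i _]; first exact: add_continuous.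
by move=> x; apply: continuous_comp; [exact: coord_continuous | exact: Fc].
Qed.

Lemma norm1_rV_continuous N : continuous (@norm1_rV N).
Proof.
apply: (@continuous_sum_coord N (fun=> Num.norm)) => i.
exact: norm_continuous.
Qed.

Lemma norm1_rV_ge_coord N (x : 'rV[R]_N) i : `|x ord0 i| <= norm1_rV x.
Proof. by rewrite /norm1_rV (bigD1 i) //= lerDl; apply: sumr_ge0. Qed.

Lemma norm1_rV_min N (P : set 'rV[R]_N) : closed P -> P !=set0 ->
  exists2 x, P x & forall y, P y -> norm1_rV x <= norm1_rV y.
Proof.
move=> cP [x0 Px0].
pose Q := P `&` [set y | norm1_rV y <= norm1_rV x0].
have cQ : closed Q.
  apply: closedI => //.
  apply: (@preimage_closed _ _ _ [set r | r <= norm1_rV x0]).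
    by move=> y _; exact: norm1_rV_continuous.
  exact: closed_le.
have bQ : bounded_set Q.
  exists (norm1_rV x0); split; first exact: num_real.
  move=> M /ltW x0M y [_ yx0]; rewrite /= [leLHS]/Num.norm /= mx_normrE.
  apply: bigmax_le => [|[i j] _ /=].
    by apply: le_trans x0M; apply: sumr_ge0.
  rewrite (ord1 i); apply: le_trans (norm1_rV_ge_coord _ _) _.
  exact: le_trans yx0 x0M.
have [x Qx xmin] := EVT_min_rV (ex_intro _ x0 (conj Px0 (lexx _)) : Q !=set0)
  (bounded_closed_compact bQ cQ)
  (continuous_subspaceT (@norm1_rV_continuous N)).
move: Qx; rewrite inE => -[Px xx0]; exists x => // y Py.
have [yx0|/ltW x0y] := leP (norm1_rV y) (norm1_rV x0); last exact: le_trans x0y.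
by apply: xmin; rewrite inE.
Qed.

End RowNorm1.

Section FiniteSupport.
Variable R : realType.

Lemma sum_ord_zero_tail N0 N (F : nat -> R) : (N0 <= N)%N ->
  (forall i, (N0 <= i)%N -> F i = 0) -> \sum_(i < N) F i = \sum_(i < N0) F i.
Proof.
move=> N0N F0; rewrite -!(big_mkord xpredT) (big_cat_nat (n:=N0) _ N0N) //=.
rewrite [X in _ + X]big1_seq ?addr0 // => i /andP[_].
by rewrite mem_iota => /andP[/F0].
Qed.

Lemma series_finite_support (u : nat -> R) N :
  (forall i, (N <= i)%N -> u i = 0) ->
  cvgn (series u) /\ limn (series u) = \sum_(i < N) u i.
Proof.
move=> u0.
have E : \forall m \near \oo, series u m = \sum_(i < N) u i.
  near=> m; rewrite /series /= big_mkord (sum_ord_zero_tail (N0 := N)) //.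
  by near: m; exact: nbhs_infty_ge.
by split; [apply/cvg_ex; exists (\sum_(i < N) u i); exact: cvg_near_cst
          | exact: lim_near_cst].
Unshelve. all: by end_near.
Qed.

Definition pad0 N (x : 'rV[R]_N) (i : nat) : R :=
  if insub i : option 'I_N is Some j then x ord0 j else 0.

Lemma pad0_ord N (x : 'rV[R]_N) (j : 'I_N) : pad0 x j = x ord0 j.
Proof. by rewrite /pad0 valK. Qed.

Lemma pad0_ge N (x : 'rV[R]_N) i : (N <= i)%N -> pad0 x i = 0.
Proof. by move=> Ni; rewrite /pad0 insubF // ltnNge Ni. Qed.

Lemma series_norm_pad0 N (x : 'rV[R]_N) :
  cvgn (series (fun i => `|pad0 x i|)) /\
  limn (series (fun i => `|pad0 x i|)) = norm1_rV x.
Proof.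
case: (@series_finite_support (fun i => `|pad0 x i|) N) => [i Ni|cv lim_eq].
  by rewrite pad0_ge ?normr0.
by split => //; rewrite lim_eq; apply: eq_bigr => i _; rewrite pad0_ord.
Qed.

Lemma pad0_in_l1 N (x : 'rV[R]_N) : in_l1 (pad0 x).
Proof. by have [] := series_norm_pad0 x. Qed.

Lemma norm1_pad0 N (x : 'rV[R]_N) : norm1 (pad0 x) = norm1_rV x.
Proof. by have [] := series_norm_pad0 x. Qed.

Lemma adj_pair_pad0 (H : normedModType R) (A : H -> nat -> R) N
    (x : 'rV[R]_N) z :
  adj_pair A (pad0 x) z = \sum_(i < N) x ord0 i * A z i.
Proof.
rewrite /adj_pair.
case: (@series_finite_support (fun i => pad0 x i * A z i) N) => [i Ni|_ ->].
  by rewrite pad0_ge ?mul0r.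
by apply: eq_bigr => i _; rewrite pad0_ord.
Qed.

End FiniteSupport.

Section L1Series.
Variable R : realType.

Lemma series_norm_le_norm1 (v : nat -> R) m :
  in_l1 v -> series (fun k => `|v k|) m <= norm1 v.
Proof.
move=> v1; apply: nondecreasing_cvgn_le v1 m.
by apply: nondecreasing_series => *.
Qed.

Lemma series_l1_mul_cvg (v g : nat -> R) M :
  in_l1 v -> (forall i, `|g i| <= M) -> cvgn (series (fun i => v i * g i)).
Proof.
move=> v1 gM; have M0 : 0 <= M := le_trans (normr_ge0 _) (gM 0%N).
apply: normed_cvg; apply: (@series_le_cvg R _ (fun i => M * `|v i|)).
- by move=> i; exact: normr_ge0.
- by move=> i; rewrite mulr_ge0.
- by move=> i /=; rewrite normrM mulrC ler_wpM2r.
- exact: (@is_cvg_seriesZ R _ M v1).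
Qed.

Lemma series_tail_le (v g : nat -> R) N d :
  in_l1 v -> cvgn (series (fun i => v i * g i)) ->
  (forall i, (N <= i)%N -> `|g i| <= d) ->
  `|limn (series (fun i => v i * g i)) - series (fun i => v i * g i) N|
    <= d * (norm1 v - series (fun i => `|v i|) N).
Proof.
move=> v1 cv gd; have d0 : 0 <= d := le_trans (normr_ge0 _) (gd N (leqnn N)).
set S := series _.
have cvt : (fun m => `|S m - S N|) @ \oo --> `|limn S - S N|.
  by apply: cvg_norm; apply: cvgB; [exact: cv | exact: cvg_cst].
rewrite -(cvg_lim _ cvt) //; apply: limr_le; first exact: cvgP cvt.
near=> m; have Nm : (N <= m)%N by near: m; exact: nbhs_infty_ge.
rewrite sub_series_geq //; apply: le_trans (ler_norm_sum _ _ _) _.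
apply: (@le_trans _ _ (\sum_(N <= i < m) d * `|v i|)).
  apply: ler_sum_nat => i /andP[Ni _].
  by rewrite normrM mulrC ler_wpM2r // gd.
rewrite -mulr_sumr ler_wpM2l // -sub_series_geq //.
by rewrite lerD2r series_norm_le_norm1.
Unshelve. all: by end_near.
Qed.

End L1Series.

Lemma linear_combinationE (R : realType) (H : lmodType R) n (F : H -> R)
    (e : 'I_n -> H) (c : 'I_n -> R) :
  (forall (a : R) x y, F (a *: x + y) = a * F x + F y) ->
  F (\sum_(k < n) c k *: e k) = \sum_(k < n) c k * F (e k).
Proof.
move=> FL; have F0 : F 0 = 0.
  have := FL 1 0 0; rewrite scaler0 addr0 mul1r => F00.
  by apply: (addrI (F 0)); rewrite addr0 -F00.
have FD x y : F (x + y) = F x + F y by have := FL 1 x y; rewrite scale1r mul1r.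
rewrite (big_morph F FD F0); apply: eq_bigr => k _.
by rewrite -[_ *: _]addr0 FL F0 addr0.
Qed.

Lemma spanH_vec (R : realType) (H : normedModType R) n (e : 'I_n -> H) k :
  spanH e (e k).
Proof.
exists (fun j => (j == k)%:R).
rewrite (bigD1 k) //= eqxx scale1r big1 ?addr0 //.
by move=> j /negbTE ->; rewrite scale0r.
Qed.

Section Biorthogonal.
Variables (R : realType) (n : nat) (a : 'I_n -> nat -> R).
Hypothesis a_indep : forall c : 'I_n -> R,
  (forall i, \sum_(k < n) c k * a k i = 0) -> forall k, c k = 0.

Definition truncation N : 'M[R]_(n, N) := \matrix_(k, i) a k i.

(* By independence of the a_k, a nonzero vector of the left kernel of
   [truncation N] leaves the kernel once enough columns are added, so the
   kernel rank strictly drops until it is 0. *)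
Lemma row_free_truncation : exists N, row_free (truncation N).
Proof.
suff kerP r N : (\rank (kermx (truncation N)) <= r)%N ->
    exists N', row_free (truncation N').
  exact: (kerP n 0%N (rank_leq_row _)).
elim: r N => [|r IH] N kerN.
  by exists N; rewrite -kermx_eq0 -mxrank_eq0 -leqn0.
have [K0|K0] := eqVneq (kermx (truncation N)) 0.
  by exists N; rewrite -kermx_eq0 K0.
set c := nz_row (kermx (truncation N)).
have cK : (c <= kermx (truncation N))%MS := nz_row_sub _.
have [i ci] : exists i, \sum_(k < n) c 0 k * a k i != 0.
  apply: contrapT => c_ker.
  have c0 : forall k, c 0 k = 0.
    apply: a_indep => j; apply: contrapT => cj.
    by apply: c_ker; exists j; apply/eqP.
  move: K0; rewrite -nz_row_eq0 -/c (_ : c = 0) ?eqxx //.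
  by apply/rowP => k; rewrite mxE c0.
pose N' := maxn N i.+1.
have sub : (kermx (truncation N') <= kermx (truncation N))%MS.
  apply/sub_kermxP/matrixP => x y; rewrite !mxE.
  have yN' : (y < N')%N by rewrite leq_max ltn_ord.
  transitivity ((kermx (truncation N') *m truncation N') x (Ordinal yN')).
    by rewrite mxE; apply: eq_bigr => k _; rewrite !mxE.
  by rewrite mulmx_ker mxE.
have notsub : ~~ (kermx (truncation N) <= kermx (truncation N'))%MS.
  have iN' : (i < N')%N by rewrite leq_max ltnSn orbT.
  apply/negP => /(submx_trans cK)/sub_kermxP/rowP/(_ (Ordinal iN')).
  rewrite !mxE => ci0; move: ci; rewrite (_ : \sum_(k < n) _ = 0) ?eqxx //.
  by rewrite -[RHS]ci0; apply: eq_bigr => k _; rewrite mxE.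
have ltK : (kermx (truncation N') < kermx (truncation N))%MS.
  by rewrite ltmxE sub notsub.
by apply: (IH N'); rewrite -ltnS (leq_trans (rank_ltmx ltK)).
Qed.

Lemma exists_biorthogonal : exists N0 (w : 'I_n -> nat -> R),
  (forall k i, (N0 <= i)%N -> w k i = 0) /\
  forall N, (N0 <= N)%N -> forall k l, \sum_(i < N) w k i * a l i = (l == k)%:R.
Proof.
have [N0 /row_freeP[B aB]] := row_free_truncation.
exists N0, (fun k => pad0 (row k B^T)); split => [k i|N N0N k l].
  exact: pad0_ge.
rewrite (sum_ord_zero_tail (F := fun i => pad0 (row k B^T) i * a l i) N0N);
  last first.
  by move=> i /pad0_ge ->; rewrite mul0r.
transitivity ((truncation N0 *m B) l k); last by rewrite aB mxE.
by rewrite mxE; apply: eq_bigr => j _; rewrite pad0_ord !mxE mulrC.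
Qed.

End Biorthogonal.

Section FiniteReduction.
Variables (R : realType) (n : nat) (a : 'I_n -> nat -> R) (b : 'I_n -> R).

Definition solutions N : set 'rV[R]_N :=
  [set x | forall l, \sum_(i < N) x ord0 i * a l i = b l].

Definition l1_feasible (v : nat -> R) : Prop :=
  in_l1 v /\ forall k, limn (series (fun i => v i * a k i)) = b k.

Lemma closed_solutions N : closed (@solutions N).
Proof.
have -> : @solutions N = \bigcap_(l in setT)
    ((fun x : 'rV[R]_N => \sum_(i < N) x ord0 i * a l i) @^-1` [set b l]).
  by apply/seteqP; split => x /= xS l; [move=> _ | ]; exact: xS.
apply: closed_bigI => l _; apply: preimage_closed; last exact: closed_eq.
move=> x _; apply: (@continuous_sum_coord R N (fun i r => r * a l i)) => i.
exact: mulrr_continuous.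
Qed.

Variables (N0 : nat) (w : 'I_n -> nat -> R).
Hypothesis w_supp : forall k i, (N0 <= i)%N -> w k i = 0.
Hypothesis w_biorth : forall N, (N0 <= N)%N ->
  forall k l, \sum_(i < N) w k i * a l i = (l == k)%:R.

Lemma biorthogonal_combination N (y : 'I_n -> R) l : (N0 <= N)%N ->
  \sum_(i < N) (\sum_(k < n) y k * w k i) * a l i = y l.
Proof.
move=> N0N; under eq_bigr do rewrite mulr_suml.
rewrite exchange_big /=.
under eq_bigr do
  (under eq_bigr do rewrite -mulrA; rewrite -mulr_sumr w_biorth //).
rewrite (bigD1 l) //= eqxx mulr1 big1 ?addr0 // => k kl.
by rewrite eq_sym (negbTE kl) mulr0.
Qed.

Lemma solutions_nonempty N : (N0 <= N)%N -> @solutions N !=set0.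
Proof.
move=> N0N; exists (\row_(i < N) \sum_(k < n) b k * w k i) => l /=.
by under eq_bigr do rewrite mxE; exact: biorthogonal_combination.
Qed.

(* Truncate v at N and correct the n residuals with the w_k. *)
Lemma truncate_repair N d (v : nat -> R) : (N0 <= N)%N -> 0 <= d ->
  d * (\sum_(k < n) \sum_(i < N0) `|w k i|) <= 1 ->
  (forall i, (N <= i)%N -> forall k, `|a k i| <= d) ->
  (forall k, cvgn (series (fun i => v i * a k i))) -> l1_feasible v ->
  exists2 x, @solutions N x & norm1_rV x <= norm1 v.
Proof.
move=> N0N d0 dW ad vacv [v1 vab].
set P := series (fun i => `|v i|) N; set eps := d * (norm1 v - P).
pose t k := b k - series (fun i => v i * a k i) N.
have t_eps k : `|t k| <= eps.
  by rewrite /t -vab series_tail_le // => i Ni; exact: ad.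
have seriesE (u : nat -> R) : series u N = \sum_(i < N) u i.
  by rewrite /series /= big_mkord.
exists (\row_(i < N) (v i + \sum_(k < n) t k * w k i)).
  move=> l /=; under eq_bigr do rewrite mxE mulrDl.
  rewrite big_split /= biorthogonal_combination // /t.
  by rewrite -(seriesE (fun i => v i * a l i)) addrC subrK.
have corr : \sum_(i < N) `|\sum_(k < n) t k * w k i|
    <= eps * \sum_(k < n) \sum_(i < N0) `|w k i|.
  apply: le_trans (ler_sum _ (fun i _ => ler_norm_sum _ _ _)) _.
  rewrite exchange_big mulr_sumr /=; apply: ler_sum => k _.
  under eq_bigr do rewrite normrM.
  rewrite -mulr_sumr (sum_ord_zero_tail (F := fun i => `|w k i|) N0N).
    by rewrite ler_wpM2r ?sumr_ge0 ?t_eps.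
  by move=> i /w_supp ->; rewrite normr0.
have epsW : eps * \sum_(k < n) \sum_(i < N0) `|w k i| <= norm1 v - P.
  by rewrite mulrAC ler_piMl // subr_ge0 series_norm_le_norm1.
rewrite /norm1_rV; under eq_bigr do rewrite mxE.
apply: le_trans (ler_sum _ (fun i _ => ler_normD _ _)) _.
rewrite big_split /= -(seriesE (fun i => `|v i|)) -/P.
lra.
Qed.

End FiniteReduction.

Lemma l1_min_finite_support (R : realType) n (a : 'I_n -> nat -> R) b :
  (forall k, a k @ \oo --> 0) ->
  (forall c : 'I_n -> R, (forall i, \sum_(k < n) c k * a k i = 0) ->
     forall k, c k = 0) ->
  exists N (x : 'rV[R]_N), solutions a b x /\
    forall v, l1_feasible a b v -> norm1_rV x <= norm1 v.
Proof.
move=> a0 a_indep.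
have [N0 [w [w_supp w_biorth]]] := exists_biorthogonal a_indep.
set W := \sum_(k < n) \sum_(i < N0) `|w k i|.
have W0 : 0 <= W by do 2!apply: sumr_ge0 => ? _.
pose d := (W + 1)^-1.
have d0 : 0 < d by rewrite invr_gt0 ltr_wpDl.
have dW : d * W <= 1 by rewrite mulrC ler_pdivrMr ?mul1r ?lerDl ?ltr_wpDl.
have [N [N0N aN]] : exists N, (N0 <= N)%N /\
    forall i, (N <= i)%N -> forall k, `|a k i| <= d.
  have : \forall i \near \oo, (N0 <= i)%N /\ forall k, `|a k i| <= d.
    near=> i; split; first by near: i; exact: nbhs_infty_ge.
    by near: i; apply: filter_forall => k; exact: (cvgr0_norm_le _ (a0 k)).
  by case=> M _ aM; exists M; split=> [|i /aM[]//]; case: (aM M (leqnn M)).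
have [x xS xmin] := norm1_rV_min (@closed_solutions R n a b N)
  (@solutions_nonempty R n a b N0 w w_biorth N N0N).
exists N, x; split => // v [v1 vab].
have vacv k : cvgn (series (fun i => v i * a k i)).
  have /cvg_seq_bounded [M [_ aM]] : cvgn (a k) by apply/cvg_ex; exists 0.
  by apply: (series_l1_mul_cvg (M := M + 1)) => // i; apply: aM; rewrite ?ltrDl.
have [y yS yv] :=
  truncate_repair w_supp w_biorth N0N (ltW d0) dW aN vacv (conj v1 vab).
exact: le_trans (xmin y yS) yv.
Unshelve. all: by end_near.
Qed.

Theorem proposition1 (R : realType) (H : completeNormedModType R)
  (ip : H -> H -> R) (A : H -> nat -> R) (n : nat) (e : 'I_n -> H) (f : H) :
  is_inner_product ip ->
  bounded_linear_to_c0 A ->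
  lin_indep e ->
  (forall z, spanH e z -> A z = (fun _ => 0) -> z = 0) ->
  exists u, feasible ip A (spanH e) f u /\
    forall v, feasible ip A (spanH e) f v -> norm1 u <= norm1 v.
Proof.
move=> [_ [ipL _]] [AL [Ac0 _]] e_indep A_inj.
pose a k i := A (e k) i; pose b k := ip (e k) f.
have AE c i : A (\sum_(k < n) c k *: e k) i = \sum_(k < n) c k * a k i.
  by apply: (linear_combinationE (F := fun x => A x i)) => s x y; exact: AL.
have ipE c : ip (\sum_(k < n) c k *: e k) f = \sum_(k < n) c k * b k.
  by apply: (linear_combinationE (F := fun x => ip x f)) => s x y; exact: ipL.
have a_indep c : (forall i, \sum_(k < n) c k * a k i = 0) -> forall k, c k = 0.
  move=> ca; apply/e_indep/A_inj; first by exists c.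
  by apply: funext => i; rewrite AE ca.
have [N [x [xS xmin]]] :=
  @l1_min_finite_support R n a b (fun k => Ac0 (e k)) a_indep.
exists (pad0 x); split; first split.
- exact: pad0_in_l1.
- move=> _ [c ->]; rewrite adj_pair_pad0 ipE.
  under [RHS]eq_bigr do rewrite AE mulr_sumr.
  rewrite exchange_big /=; apply: eq_bigr => k _.
  by rewrite -(xS k) mulr_sumr; apply: eq_bigr => i _; rewrite mulrCA.
- move=> v [v1 vf]; rewrite norm1_pad0; apply: xmin; split => // k.
  by rewrite /b (vf _ (spanH_vec e k)).
Qed.
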